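(* For any mechanism $(q_i,P_i)_{i\in\mathcal I}$ (with opt-out messages) and any nonnegative numbers $\alpha_i(m_i'\mid m_i)\ge 0$, $i\in\mathcal I$, $(m_i,m_i')\in M_i\times M_i$, we have for every $v\in V$: $$\min_{m\in M}\mathrm{Rev}(v,m)\le v.$$ In particular $\sum_v p(v)\min_m\mathrm{Rev}(v,m)\le\sum_v v\,p(v)$.
   Context: A mechanism for buyers $\mathcal I=\{1,\ldots,I\}$ with common value $v\in V=\{0,\nu,\ldots,1\}$ consists of finite message sets $M_i$ ($M=\prod_iM_i$), allocation rules $q_i:M\to[0,1]$ with $\sum_iq_i(m)\le1$, and payment rules $P_i:M\to\mathbb R$, where each $M_i$ contains an opt-out message $0$ with $q_i(0,m_{-i})=P_i(0,m_{-i})=0$ for all $m_{-i}$. $U_i(v,m)=v\,q_i(m)-P_i(m)$. Virtual revenue: $\mathrm{Rev}(v,m)=\sum_i\Big(P_i(m)+\sum_{m_i'\in M_i}\big(U_i(v,(m_i',m_{-i}))-U_i(v,m)\big)\alpha_i(m_i'\mid m_i)\Big)$. *)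

From HB Require Import structures.
From mathcomp Require Import all_boot all_order all_algebra.
Set Implicit Arguments. Unset Strict Implicit. Unset Printing Implicit Defensive.
Import Order.TTheory GRing.Theory Num.Theory.
Local Open Scope ring_scope.

Definition profile (I : nat) (M : 'I_I -> finType) := {dffun forall i : 'I_I, M i}.

(* (x, m_{-i}) : replace buyer i's message in m by x. *)
Definition upd (I : nat) (M : 'I_I -> finType) (m : profile M) (i : 'I_I) (x : M i)
  : profile M :=
  [ffun j => if (i =P j) is ReflectT e then ecast k (M k) e x else m j].
Arguments upd {I M} m i x.

Definition is_mechanism (R : realFieldType) (I : nat) (M : 'I_I -> finType)
  (opt : forall i, M i) (q P : 'I_I -> profile M -> R) : Prop :=
  [/\ (forall i m, 0 <= q i m),
      (forall m, \sum_(i < I) q i m <= 1),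
      (forall i (m : profile M), q i (upd m i (opt i)) = 0) &
      (forall i (m : profile M), P i (upd m i (opt i)) = 0)].

Definition util (R : realFieldType) (I : nat) (M : 'I_I -> finType)
  (q P : 'I_I -> profile M -> R) (i : 'I_I) (v : R) (m : profile M) : R :=
  v * q i m - P i m.

(* Virtual revenue; alpha i m' mi stands for alpha_i(m' | m_i). *)
Definition Rev (R : realFieldType) (I : nat) (M : 'I_I -> finType)
  (q P : 'I_I -> profile M -> R) (alpha : forall i, M i -> M i -> R)
  (v : R) (m : profile M) : R :=
  \sum_(i < I) (P i m + \sum_(x : M i)
      (util q P i v (upd m i x) - util q P i v m) * alpha i x (m i)).

(* The all-opt-out profile (witness that M is nonempty). *)
Definition opt_profile (I : nat) (M : 'I_I -> finType) (opt : forall i, M i)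
  : profile M := [ffun i => opt i].

Definition minRev (R : realFieldType) (I : nat) (M : 'I_I -> finType)
  (opt : forall i, M i) (q P : 'I_I -> profile M -> R)
  (alpha : forall i, M i -> M i -> R) (v : R) : R :=
  \big[Num.min/Rev q P alpha v (opt_profile opt)]_(m : profile M) Rev q P alpha v m.

Definition gridV (R : realFieldType) (N : nat) (k : 'I_N.+1) : R := k%:R / N%:R.

(* Let each buyer i move among his messages as a continuous-time Markov chain
   jumping from y to x at rate alpha_i(x | y), plus a unit rate towards the
   opt-out message, and let pi_i be a stationary measure of this chain; one
   exists on any finite state space, by eliminating the states one at a time.
   Under the product measure prod_i pi_i the expected drift of any function of
   the profile caused by buyer i's moves vanishes.  With the extra opt-out rate,
   Rev(v, m) is v * sum_i q_i(m) plus the drifts of the utilities U_i(v, .), so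
   its average under the product measure is at most v, and so is its minimum. *)

From HB Require Import structures.
From mathcomp Require Import all_boot all_order all_algebra ring lra.
Set Implicit Arguments. Unset Strict Implicit. Unset Printing Implicit Defensive.
Import Order.TTheory GRing.Theory Num.Theory.
Local Open Scope ring_scope.

Section StationaryMeasure.
Variables (R : realFieldType) (T : finType).
Implicit Types (S : {set T}) (b : T -> T -> R) (pi : T -> R).

(* [b x y] is the rate of jumping from [y] to [x]: balance means that, inside
   [S], the mass flowing into [x] equals the mass flowing out of [x]. *)
Definition balanced_on S b pi :=
  forall x, x \in S -> \sum_(y in S) pi y * b x y = pi x * \sum_(y in S) b y x.

Definition stationary b pi :=
  forall x, \sum_y pi y * b x y = pi x * \sum_y b y x.

Lemma balanced_point_mass S b z : z \in S ->
  (forall x, x \in S :\ z -> b x z = 0) ->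
  balanced_on S b (fun x => (x == z)%:R).
Proof.
move=> Sz bz0 x Sx; rewrite (big_setD1 z) //= eqxx mul1r big1 ?addr0; last first.
  by move=> y; rewrite in_setD1 => /andP[/negbTE -> _]; rewrite mul0r.
have [->|xz] := eqVneq x z.
  by rewrite mul1r (big_setD1 z) //= big1 ?addr0 // => y /bz0.
by rewrite mul0r bz0 // in_setD1 xz.
Qed.

(* The chain watched only while it is off [z]: a jump from [y] to [z] is
   followed by a jump from [z] to [x] with probability [b x z / (exit rate of z)]. *)
Definition censor S b z : T -> T -> R :=
  fun x y => b x y + b z y * b x z / \sum_(w in S :\ z) b w z.

Definition extend_censored S b z pi : T -> R :=
  fun x => if x == z then (\sum_(y in S :\ z) pi y * b z y) / \sum_(w in S :\ z) b w z
           else pi x.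

Lemma balanced_extend_censored S b z pi : z \in S ->
  \sum_(w in S :\ z) b w z != 0 ->
  balanced_on (S :\ z) (censor S b z) pi ->
  balanced_on S b (extend_censored S b z pi).
Proof.
rewrite /censor /extend_censored.
set S' := S :\ z; set o := \sum_(w in S') b w z.
set rho := (\sum_(y in S') pi y * b z y) / o => Sz o_neq0 bal x Sx.
have off_z F : \sum_(y in S') (if y == z then rho else pi y) * F y = \sum_(y in S') pi y * F y.
  by apply: eq_bigr => y; rewrite in_setD1 => /andP[/negbTE ->].
rewrite (big_setD1 z) //= eqxx off_z.
have [->|xz] := eqVneq x z.
  by rewrite [in RHS](big_setD1 z) //= -/S' -/o /rho; field.
have S'x : x \in S' by rewrite in_setD1 xz.
rewrite [in RHS](big_setD1 z) //= -/S'.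
have := bal x S'x; rewrite -/o.
have -> : \sum_(y in S') pi y * (b x y + b z y * b x z / o)
        = \sum_(y in S') pi y * b x y + rho * b x z.
  by rewrite /rho !big_distrl -big_split /=; apply: eq_bigr => y _; field.
have -> : \sum_(y in S') (b y x + b z x * b y z / o) = \sum_(y in S') b y x + b z x.
  by rewrite big_split /= -big_distrl -big_distrr /= -/o; field.
by rewrite addrC (addrC (b z x)) => ->.
Qed.

Lemma exists_balanced_on S b : S != set0 -> (forall x y, 0 <= b x y) ->
  exists pi, [/\ forall x, 0 <= pi x, exists2 x, x \in S & 0 < pi x &
                 balanced_on S b pi].
Proof.
have [n] := ubnP #|S|; elim: n S b => // n IH S b /ltnSE leSn S_neq0 b_ge0.
have [z Sz] := set0Pn _ S_neq0.
have o_ge0 : 0 <= \sum_(w in S :\ z) b w z by apply: sumr_ge0.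
have [o0|o_neq0] := eqVneq (\sum_(w in S :\ z) b w z) 0.
  exists (fun x => (x == z)%:R); split => [x||]; first by rewrite ler0n.
    by exists z; rewrite ?eqxx ?ltr01.
  exact: (balanced_point_mass Sz (psumr_eq0P (fun y _ => b_ge0 y z) o0)).
have S'_neq0 : S :\ z != set0.
  by apply: contraNneq o_neq0 => ->; rewrite big_set0.
have ltS' : (#|S :\ z| < n)%N.
  by apply: leq_trans leSn; rewrite (cardsD1 z S) Sz.
have b'_ge0 x y : 0 <= censor S b z x y.
  by rewrite addr_ge0 // divr_ge0 // mulr_ge0.
have [pi [pi_ge0 [x0 S'x0 pi_x0] bal]] := IH _ _ ltS' S'_neq0 b'_ge0.
exists (extend_censored S b z pi); split => [x||].
- rewrite /extend_censored; case: ifP => // _.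
  by rewrite divr_ge0 // sumr_ge0 // => y _; rewrite mulr_ge0.
- move: S'x0; rewrite in_setD1 => /andP[x0z Sx0].
  by exists x0; rewrite // /extend_censored (negbTE x0z).
- exact: balanced_extend_censored.
Qed.

Lemma exists_stationary b (t0 : T) : (forall x y, 0 <= b x y) ->
  exists pi, [/\ forall x, 0 <= pi x, exists x, 0 < pi x & stationary b pi].
Proof.
move=> b_ge0; have setT_neq0 : [set: T] != set0 by apply/set0Pn; exists t0.
have [pi [pi_ge0 [x _ pi_x] bal]] := exists_balanced_on setT_neq0 b_ge0.
have sum_setT F : \sum_(w in [set: T]) F w = \sum_w F w.
  by apply: eq_bigl => w; rewrite in_setT.
exists pi; split => [//||y]; first by exists x.
by have := bal y (in_setT y); rewrite !sum_setT.
Qed.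

Lemma stationary_drift_eq0 b pi (g : T -> R) : stationary b pi ->
  \sum_y pi y * \sum_x (g x - g y) * b x y = 0.
Proof.
move=> st; have -> : \sum_y pi y * \sum_x (g x - g y) * b x y
    = \sum_x g x * \sum_y pi y * b x y - \sum_y g y * (pi y * \sum_x b x y).
  under [X in _ = X - _]eq_bigr do rewrite big_distrr.
  rewrite exchange_big -sumrB; apply: eq_bigr => y _ /=.
  rewrite !big_distrr /= -sumrB; apply: eq_bigr => x _; ring.
under eq_bigr do rewrite st.
by rewrite subrr.
Qed.

End StationaryMeasure.

Section Profiles.
Variables (I : nat) (M : 'I_I -> finType).
Implicit Types (m : profile M) (i j : 'I_I).

Lemma upd_same m i (x : M i) : upd m i x i = x.
Proof. by rewrite ffunE; case: (i =P i) => // e; rewrite (eq_irrelevance e erefl). Qed.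

Lemma upd_other m i (x : M i) j : i != j -> upd m i x j = m j.
Proof. by rewrite ffunE; case: (i =P j) => // ->; rewrite eqxx. Qed.

Lemma upd_upd m i (x y : M i) : upd (upd m i x) i y = upd m i y.
Proof.
apply/ffunP => j; have [<-|ij] := eqVneq i j; first by rewrite !upd_same.
by rewrite !upd_other.
Qed.

Lemma upd_id m i : upd m i (m i) = m.
Proof.
apply/ffunP => j; have [<-|ij] := eqVneq i j; first by rewrite upd_same.
by rewrite upd_other.
Qed.

Lemma sum_profile_fibers (R : nmodType) i (c : M i) (F : profile M -> R) :
  \sum_m F m = \sum_(m : profile M | m i == c) \sum_(x : M i) F (upd m i x).
Proof.
rewrite (partition_big (fun m : profile M => m i) xpredT) //= exchange_big /=.
apply: eq_bigr => x _.
rewrite (reindex_onto (fun m : profile M => upd m i x) (fun m => upd m i c)) /=; last first.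
  by move=> m /eqP <-; rewrite upd_upd upd_id.
apply: eq_bigl => m; rewrite upd_same eqxx upd_upd /=.
by apply/eqP/eqP => [<-|<-]; rewrite ?upd_same ?upd_id.
Qed.

End Profiles.

Section ProductMeasure.
Variables (R : realFieldType) (I : nat) (M : 'I_I -> finType).
Implicit Types (m : profile M) (i j : 'I_I).

Definition prod_measure (pi : forall i, M i -> R) m : R := \prod_j pi j (m j).

(* [Rev q P alpha v m] unfolds to [\sum_i (P i m + drift alpha (util q P i v) i m)]. *)
Definition drift (b : forall i, M i -> M i -> R) (g : profile M -> R) i m : R :=
  \sum_(x : M i) (g (upd m i x) - g m) * b i x (m i).

Lemma prod_measure_sum_gt0 (pi : forall i, M i -> R) :
  (forall i x, 0 <= pi i x) -> (forall i, exists x, 0 < pi i x) ->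
  0 < \sum_m prod_measure pi m.
Proof.
move=> pi_ge0 /fin_all_exists[xs pi_xs]; pose ms : profile M := [ffun i => xs i].
rewrite (bigD1 ms) //=; apply: ltr_wpDr.
  by apply: sumr_ge0 => m _; apply: prodr_ge0.
by apply: prodr_gt0 => j _; rewrite ffunE.
Qed.

Lemma prod_measure_drift_eq0 pi b g i : stationary (b i) (pi i) ->
  \sum_m prod_measure pi m * drift b g i m = 0.
Proof.
move=> st; have [m0 _|no_profile] := pickP (@predT (profile M)); last first.
  by rewrite big_pred0.
rewrite (sum_profile_fibers (m0 i)) big1 // => m _.
pose w := \prod_(j | j != i) pi j (m j).
have muE y : prod_measure pi (upd m i y) = pi i y * w.
  rewrite /prod_measure (bigD1 i) //= upd_same; congr (_ * _).
  by apply: eq_bigr => j ji; rewrite upd_other // eq_sym.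
have driftE y : drift b g i (upd m i y)
    = \sum_x (g (upd m i x) - g (upd m i y)) * b i x y.
  by rewrite /drift upd_same; apply: eq_bigr => x _; rewrite upd_upd.
under eq_bigr do rewrite muE driftE mulrAC.
by rewrite -big_distrl /= (stationary_drift_eq0 (fun x => g (upd m i x)) st) mul0r.
Qed.

End ProductMeasure.

Lemma bigmin_mul_sum_le (R : realFieldType) (T : finType) (x0 : R) (F w : T -> R) :
  (forall t, 0 <= w t) ->
  \big[Num.min/x0]_t F t * \sum_t w t <= \sum_t w t * F t.
Proof.
move=> w_ge0; rewrite mulr_sumr; apply: ler_sum => t _.
by rewrite mulrC ler_wpM2l // bigmin_le.
Qed.

Section VirtualRevenue.
Variables (R : realFieldType) (I : nat) (M : 'I_I -> finType).
Variables (opt : forall i, M i) (q P : 'I_I -> profile M -> R).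
Variable alpha : forall i, M i -> M i -> R.
Arguments alpha : clear implicits.
Hypothesis mech : is_mechanism opt q P.
Hypothesis alpha_ge0 : forall i x y, 0 <= alpha i x y.

(* With an extra unit rate towards opting out, the drift of [U_i] picks up
   [U_i(v, (0, m_{-i})) - U_i(v, m) = P_i(m) - v q_i(m)], absorbing the payment. *)
Definition optout_rates i (x y : M i) : R := alpha i x y + (x == opt i)%:R.
Arguments optout_rates : clear implicits.

Lemma optout_rates_ge0 i x y : 0 <= optout_rates i x y.
Proof. by rewrite addr_ge0 ?ler0n. Qed.

Lemma Rev_optout_drift v m :
  Rev q P alpha v m = \sum_i (v * q i m + drift optout_rates (util q P i v) i m).
Proof.
have [_ _ q_opt P_opt] := mech; apply: eq_bigr => i _.
rewrite /drift /optout_rates; under [in RHS]eq_bigr do rewrite mulrDr.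
rewrite big_split /= [\sum_x _ * (_ == _)%:R](bigD1 (opt i)) //= eqxx mulr1.
rewrite [\sum_(x | x != opt i) _]big1 => [|x /negbTE ->]; last by rewrite mulr0.
rewrite addr0 /util q_opt P_opt; lra.
Qed.

Lemma prod_measure_avg_Rev_le (pi : forall i, M i -> R) v :
  (forall i x, 0 <= pi i x) -> (forall i, stationary (optout_rates i) (pi i)) ->
  0 <= v ->
  \sum_m prod_measure pi m * Rev q P alpha v m <= v * \sum_m prod_measure pi m.
Proof.
move=> pi_ge0 pi_st v_ge0; have [_ q_le1 _ _] := mech.
under eq_bigr do rewrite Rev_optout_drift big_split /= -big_distrr mulrDr.
rewrite big_split /=.
have -> : \sum_m prod_measure pi m * \sum_i drift optout_rates (util q P i v) i m = 0.
  under eq_bigr do rewrite big_distrr.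
  by rewrite exchange_big big1 // => i _; apply: prod_measure_drift_eq0.
rewrite addr0 big_distrr; apply: ler_sum => m _.
rewrite mulrCA ler_wpM2l // -[leRHS]mulr1 ler_wpM2l ?q_le1 //.
exact: prodr_ge0.
Qed.

Lemma minRev_le v : 0 <= v -> minRev opt q P alpha v <= v.
Proof.
move=> v_ge0.
have /fin_all_exists[pi pi_spec] i := exists_stationary (opt i) (@optout_rates_ge0 i).
have pi_ge0 i x : 0 <= pi i x by case: (pi_spec i).
have pi_pos i : exists x, 0 < pi i x by case: (pi_spec i).
have pi_st i : stationary (optout_rates i) (pi i) by case: (pi_spec i).
rewrite -(ler_pM2r (prod_measure_sum_gt0 pi_ge0 pi_pos)).
apply: le_trans (prod_measure_avg_Rev_le pi_ge0 pi_st v_ge0).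
by apply: bigmin_mul_sum_le => m; apply: prodr_ge0.
Qed.

End VirtualRevenue.

Theorem lemma1 (R : realFieldType) (N : nat) (I : nat) (M : 'I_I -> finType)
  (opt : forall i, M i) (q P : 'I_I -> profile M -> R)
  (alpha : forall i, M i -> M i -> R) :
  (0 < N)%N ->
  is_mechanism opt q P ->
  (forall i x y, 0 <= alpha i x y) ->
  (forall k : 'I_N.+1, minRev opt q P alpha (gridV R k) <= gridV R k) /\
  (forall p : 'I_N.+1 -> R, (forall k, 0 <= p k) ->
     \sum_(k < N.+1) p k * minRev opt q P alpha (gridV R k)
       <= \sum_(k < N.+1) gridV R k * p k).
Proof.
move=> _ mech alpha_ge0.
have gridV_ge0 (k : 'I_N.+1) : 0 <= gridV R k by rewrite divr_ge0 ?ler0n.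
have minRev_grid (k : 'I_N.+1) := minRev_le mech alpha_ge0 (gridV_ge0 k).
split=> // p p_ge0; apply: ler_sum => k _.
by rewrite mulrC ler_wpM2r.
Qed.
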